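(* Let $n$ be a positive integer and let $P$ and $Q$ be $3$-good partitions of $[n]$ whose collections of $3$-element parts coincide. Then $P=Q$. In other words, a $3$-good partition of $[n]$ is uniquely determined by $n$ together with the set of its parts of size exactly $3$.
   Context: A partition of $[n]=\{1,\dots,n\}$ into nonempty parts is called $3$-good if every part has at most $3$ elements and the sum of the elements of every part is a power of $3$, i.e. equals $3^s$ for some integer $s\ge 0$. *)

From mathcomp Require Import all_boot.
Set Implicit Arguments. Unset Strict Implicit. Unset Printing Implicit Defensive.

(* The ground set [n] = {1,...,n} is represented inside 'I_n.+1 as the
   elements with nonzero value; element x : 'I_n.+1 stands for the integer
   (val x). *)
Definition ground (n : nat) : {set 'I_n.+1} := [set x : 'I_n.+1 | 0 < val x].

Definition part_sum (n : nat) (B : {set 'I_n.+1}) : nat := \sum_(x in B) val x.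

Definition three_good (n : nat) (P : {set {set 'I_n.+1}}) : Prop :=
  partition P (ground n) /\
  forall B, B \in P -> #|B| <= 3 /\ exists s : nat, part_sum B = 3 ^ s.

Definition triples (n : nat) (P : {set {set 'I_n.+1}}) : {set {set 'I_n.+1}} :=
  [set B in P | #|B| == 3].

(* Look at the largest element x of [n] whose blocks in P and Q differ.  A
   block of size 3 is shared, and a block containing an element above x is
   shared by maximality, so both blocks of x have x as their maximum and at
   most two elements.  Such a block is {x} or {x, y} with 0 < y < x, so its sum
   lies in [x, 2x), an interval containing at most one power of 3; and a block
   of this shape is determined by its sum. *)

From mathcomp Require Import all_boot.
From mathcomp Require Import zify.

Set Implicit Arguments. Unset Strict Implicit. Unset Printing Implicit Defensive.

Lemma pow3_window_eq (x s t : nat) :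
  x <= 3 ^ s < x.*2 -> x <= 3 ^ t < x.*2 -> s = t.
Proof.
wlog st : s t / s <= t => [hwlog|] hs ht.
  by case: (leqP s t) => [|/ltnW] st; [|symmetry]; apply: hwlog.
case: (ltngtP s t) st => // lt_st _.
have : 3 * 3 ^ s <= 3 ^ t by rewrite -expnS leq_pexp2l.
lia.
Qed.

Lemma cards_le1_cases (T : finType) (D : {set T}) :
  #|D| <= 1 -> D = set0 \/ exists y, D = [set y].
Proof.
rewrite leq_eqVlt ltnS leqn0 cards_eq0 => /orP[/cards1P[y ->]|/eqP->].
- by right; exists y.
- by left.
Qed.

Section TopBlock.

Variable n : nat.
Implicit Types (B D : {set 'I_n.+1}) (x : 'I_n.+1).

Lemma part_sumD1 B x : x \in B -> part_sum B = val x + part_sum (B :\ x).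
Proof. by move=> xB; rewrite /part_sum (big_setD1 x xB). Qed.

Lemma part_sum_card_le1_inj D1 D2 :
  #|D1| <= 1 -> #|D2| <= 1 ->
  {in D1, forall y, 0 < val y} -> {in D2, forall y, 0 < val y} ->
  part_sum D1 = part_sum D2 -> D1 = D2.
Proof.
move=> /cards_le1_cases[->|[y1 ->]] /cards_le1_cases[->|[y2 ->]] pos1 pos2;
  rewrite /part_sum ?big_set1 ?big_set0 //.
- by move=> E; have := pos2 y2 (set11 y2); rewrite -E.
- by move=> E; have := pos1 y1 (set11 y1); rewrite E.
- by move=> /val_inj ->.
Qed.

Lemma top_block_sum_window B x :
  x \in B -> #|B| <= 2 -> {in B, forall y, 0 < val y <= val x} ->
  val x <= part_sum B < (val x).*2.
Proof.
move=> xB cardB bnd; rewrite (part_sumD1 xB) leq_addr -addnn ltn_add2l.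
have x_gt0 : 0 < val x by case/andP: (bnd x xB).
have : #|B :\ x| <= 1 by move: cardB; rewrite (cardsD1 x) xB add1n.
case/cards_le1_cases=> [->|[y Ey]]; first by rewrite /part_sum big_set0.
have /setD1P[yx yB] : y \in B :\ x by rewrite Ey set11.
rewrite /part_sum Ey big_set1 ltn_neqAle val_eqE yx.
by case/andP: (bnd y yB).
Qed.

Lemma top_block_pow3_uniq B1 B2 x :
  x \in B1 -> #|B1| <= 2 -> {in B1, forall y, 0 < val y <= val x} ->
  (exists s, part_sum B1 = 3 ^ s) ->
  x \in B2 -> #|B2| <= 2 -> {in B2, forall y, 0 < val y <= val x} ->
  (exists s, part_sum B2 = 3 ^ s) -> B1 = B2.
Proof.
move=> xB1 card1 bnd1 [s1 sum1] xB2 card2 bnd2 [s2 sum2].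
have win1 := top_block_sum_window xB1 card1 bnd1.
have win2 := top_block_sum_window xB2 card2 bnd2.
have eq_sum : part_sum B1 = part_sum B2.
  by rewrite sum1 sum2 (pow3_window_eq (x := val x) (s := s1) (t := s2))
       -?sum1 -?sum2.
rewrite -(setD1K xB1) -(setD1K xB2); congr (_ |: _).
apply: part_sum_card_le1_inj.
- by move: card1; rewrite (cardsD1 x) xB1 add1n.
- by move: card2; rewrite (cardsD1 x) xB2 add1n.
- by move=> y /setD1P[_ /bnd1/andP[]].
- by move=> y /setD1P[_ /bnd2/andP[]].
- by apply/eqP; rewrite -(eqn_add2l (val x)) -!part_sumD1 ?eq_sum.
Qed.

End TopBlock.

Lemma ord_ind_down (n : nat) (C : 'I_n.+1 -> Prop) :
  (forall x, (forall y, val x < val y -> C y) -> C x) -> forall x, C x.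
Proof.
move=> IH x; have [k] := ubnP (n - val x); elim: k x => // k IHk x hx.
apply: IH => y xy; apply: IHk.
by have : val y < n.+1 := ltn_ord y; lia.
Qed.

Section Partitions.

Variables (T : finType) (D : {set T}) (P Q : {set {set T}}).
Hypotheses (partP : partition P D) (partQ : partition Q D).

Lemma partition_eq_pblock : {in D, pblock P =1 pblock Q} -> P = Q.
Proof.
move=> E; rewrite -(equivalence_partition_pblock partP).
rewrite -(equivalence_partition_pblock partQ).
by apply: eq_in_imset => x xD; rewrite (E x xD).
Qed.

Lemma pblock_mem_partition x : x \in D -> pblock P x \in P.
Proof. by move=> xD; rewrite pblock_mem // (cover_partition partP). Qed.

Lemma mem_pblock_partition x : x \in D -> x \in pblock P x.
Proof. by move=> xD; rewrite mem_pblock (cover_partition partP). Qed.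

Lemma pblock_eq_shared B x : B \in P -> B \in Q -> x \in B -> pblock P x = pblock Q x.
Proof.
move=> BP BQ xB.
by rewrite (def_pblock (partition_trivIset partP) BP xB)
           (def_pblock (partition_trivIset partQ) BQ xB).
Qed.

Lemma pblock_eq_via x y :
  x \in D -> y \in pblock P x -> pblock P y = pblock Q y ->
  pblock P x = pblock Q x.
Proof.
move=> xD yPx Ey.
have tiP := partition_trivIset partP; have tiQ := partition_trivIset partQ.
have Exy : pblock P x = pblock P y by rewrite (same_pblock tiP yPx).
have xPx := mem_pblock_partition xD.
by rewrite Exy Ey (same_pblock tiQ (x := x) (y := y)) // -Ey -Exy.
Qed.

End Partitions.

Lemma pblock_triple_shared (n : nat) (P Q : {set {set 'I_n.+1}}) x :
  partition P (ground n) -> partition Q (ground n) -> triples P = triples Q ->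
  x \in ground n -> #|pblock P x| = 3 -> pblock P x = pblock Q x.
Proof.
move=> partP partQ eq_triples xD card3.
have BP := pblock_mem_partition partP xD.
have : pblock P x \in triples Q by rewrite -eq_triples inE BP card3.
rewrite inE => /andP[BQ _].
exact: (pblock_eq_shared partP partQ BP BQ (mem_pblock_partition partP xD)).
Qed.

Lemma pblock_top_bounds (n : nat) (P : {set {set 'I_n.+1}}) x :
  partition P (ground n) -> x \in ground n ->
  {in pblock P x, forall y, ~~ (val x < val y)} ->
  {in pblock P x, forall y, 0 < val y <= val x}.
Proof.
move=> partP xD top y yB; rewrite [val y <= _]leqNgt top // andbT.
have := subsetP (partitionS partP (pblock_mem_partition partP xD)) y yB.
by rewrite inE.
Qed.

Lemma three_good_pblock_eq (n : nat) (P Q : {set {set 'I_n.+1}}) :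
  three_good P -> three_good Q -> triples P = triples Q ->
  {in ground n, pblock P =1 pblock Q}.
Proof.
move=> [partP sizeP] [partQ sizeQ] eq_triples.
apply: ord_ind_down => x IH xD.
have BP := pblock_mem_partition partP xD.
have BQ := pblock_mem_partition partQ xD.
have [cardP pow3P] := sizeP _ BP; have [cardQ pow3Q] := sizeQ _ BQ.
have inD R : partition R (ground n) -> {subset pblock R x <= ground n}.
  by move=> partR; apply/subsetP/(partitionS partR)/(pblock_mem_partition partR).
have [/eqP card3|cardP'] := boolP (#|pblock P x| == 3).
  exact: pblock_triple_shared.
have [/eqP card3|cardQ'] := boolP (#|pblock Q x| == 3).
  by symmetry; apply: pblock_triple_shared.
have [/exists_inP[y yB xy]|/exists_inPn topP] :=
  boolP [exists y in pblock P x, val x < val y].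
  by apply: (pblock_eq_via partP partQ xD yB); apply: IH; last exact: inD yB.
have [/exists_inP[y yB xy]|/exists_inPn topQ] :=
  boolP [exists y in pblock Q x, val x < val y].
  by symmetry; apply: (pblock_eq_via partQ partP xD yB); symmetry;
    apply: IH; last exact: inD yB.
have xPx := mem_pblock_partition partP xD.
have xQx := mem_pblock_partition partQ xD.
apply: (top_block_pow3_uniq xPx _ _ pow3P xQx _ _ pow3Q).
- by rewrite -ltnS ltn_neqAle cardP' cardP.
- exact: pblock_top_bounds partP xD topP.
- by rewrite -ltnS ltn_neqAle cardQ' cardQ.
- exact: pblock_top_bounds partQ xD topQ.
Qed.

Theorem mainTheorem6 (n : nat) (P Q : {set {set 'I_n.+1}}) :
  0 < n -> three_good P -> three_good Q -> triples P = triples Q -> P = Q.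
Proof.
move=> _ goodP goodQ eq_triples.
apply: (partition_eq_pblock goodP.1 goodQ.1).
exact: three_good_pblock_eq.
Qed.
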